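(* Let $\varsigma=(\varsigma_1,\dots,\varsigma_K)\in\Gamma(\mathscr M_1)\oplus\dots\oplus\Gamma(\mathscr M_K)$ have the boundary decomposition property, and let $0\le m<r_K$. Suppose that every $\varsigma_k$ has an $m$-th subdiagonal matrix representation. Then there is a continuous section $G\in\Gamma(\mathscr V^{(m)})$ such that \[G|_{\alpha^i(\overline{Y_k})}=\varsigma_k^{(i)}\circ\alpha^{-i}|_{\alpha^i(\overline{Y_k})}\quad\text{for all }1\le k\le K,\ 0\le i\le r_k-1,\] and, provided $m\ge 1$, $G$ vanishes on $\alpha^{-m}(Y)\cup\alpha^{-m+1}(Y)\cup\dots\cup\alpha^{-1}(Y)$.
   Context: Let $X$ be an infinite compact metric space, $\alpha:X\to X$ a minimal homeomorphism, $\mathscr V$ a Hermitian complex line bundle over $X$, and $Y\subset X$ closed with non-empty interior. For $y\in Y$ let $r_Y(y)=\min\{n\ge1:\alpha^n(y)\in Y\}$, with distinct values $r_1<\dots<r_K$, and $Y_k=\{y\in Y:r_Y(y)=r_k\}$. Let $\mathscr V^{(0)}=X\times\mathbb C$ and $\mathscr V^{(n)}=(\alpha^{n-1})^*\mathscr V\otimes\cdots\otimes\alpha^*\mathscr V\otimes\mathscr V$, so $\mathscr V^{(n)}_x=\mathscr V_{\alpha^{n-1}(x)}\otimes\cdots\otimes\mathscr V_x=\mathscr V^{(n-m)}_{\alpha^m(x)}\otimes\mathscr V^{(m)}_x$ for $0\le m\le n$; $\Gamma(\mathscr V^{(m)})$ is its space of continuous sections. Let $\mathscr D^{(n)}=\mathscr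 V^{(0)}\oplus\cdots\oplus\mathscr V^{(n-1)}$, $\mathscr M_k=\mathrm{End}(\mathscr D^{(r_k)})|_{\overline{Y_k}}$ and $\Gamma(\mathscr M_k)$ its continuous sections. $\varsigma_k\in\Gamma(\mathscr M_k)$ has an $m$-th (lower) subdiagonal matrix representation if for every $x\in\overline{Y_k}$, $\varsigma_k(x)$ maps $\mathscr V^{(i)}_x$ into $\mathscr V^{(i+m)}_x$ for $i<r_k-m$ and maps $\mathscr V^{(i)}_x$ to $0$ for $r_k-m\le i<r_k$ (so $\varsigma_k=0$ if $m\ge r_k$). In that case, since all these spaces are one-dimensional, for $i<r_k-m$ there is a unique $\varsigma_k^{(i)}(x)\in\mathscr V^{(m)}_{\alpha^i(x)}$ with $\varsigma_k(x)v=\varsigma_k^{(i)}(x)\otimes v$ for $v\in\mathscr V^{(i)}_x$ (using $\mathscr V^{(i+m)}_x=\mathscr V^{(m)}_{\alpha^i(x)}\otimes\mathscr V^{(i)}_x$), and $\varsigma_k^{(i)}(x):=0$ for $r_k-m\le i\le r_k-1$. Boundary decomposition property: $\varsigma=(\varsigma_1,\dots,\varsigma_K)$ has it if for every $k$ and every $x\in\overline{Y_k}\setminus Y_k$ the following holds. There are indices $t_1,\dots,t_m<k$ with $r_{t_1}+\dots+r_{t_m}=r_k$ and $x\in Y_{t_1}\cap\alpha^{-r_{t_1}}(Y_{t_2})\cap\dots\cap\alpha^{-(r_{t_1}+\dots+r_{t_{m-1}})}(Y_{t_m})$. Let $R_0=0$, $R_s=r_{t_1}+\dots+r_{t_s}$,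 and identify the $s$-th component $\mathscr V^{(R_{s-1})}_x\oplus\dots\oplus\mathscr V^{(R_s-1)}_x$ of $\mathscr D^{(r_k)}_x$ with $\mathscr D^{(r_{t_s})}_{\alpha^{R_{s-1}}(x)}\otimes\mathscr V^{(R_{s-1})}_x$. The requirement is that $\varsigma_k(x)$ restricted to the $s$-th component equals $\varsigma_{t_s}(\alpha^{R_{s-1}}(x))\otimes\mathrm{id}_{\mathscr V^{(R_{s-1})}_x}$ for every $s$. *)

From HB Require Import structures.
From mathcomp Require Import all_boot all_order all_algebra.
From mathcomp Require Import all_classical all_reals all_analysis.
From mathcomp.real_closed Require Import complex.
Set Implicit Arguments. Unset Strict Implicit. Unset Printing Implicit Defensive.
Import Order.TTheory GRing.Theory Num.Theory.
Import numFieldNormedType.Exports.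
Local Open Scope classical_set_scope.
Local Open Scope ring_scope.

(* Complex-valued continuity on a subspace: real and imaginary parts are     *)
(* continuous (R[i] carries no topology in the libraries).                  *)
Definition ccontinuous_within (R : realType) (X : topologicalType)
  (A : set X) (f : X -> R[i]) : Prop :=
  {within A, continuous (fun x => complex.Re (f x))} /\
  {within A, continuous (fun x => complex.Im (f x))}.

Definition homeo (X : topologicalType) (alpha beta : X -> X) : Prop :=
  [/\ continuous alpha, continuous beta, cancel alpha beta & cancel beta alpha].

Definition minimal_homeo (X : topologicalType) (alpha beta : X -> X) : Prop :=
  forall x : X,
    closure [set y | exists n : nat, y = iter n alpha x \/ y = iter n beta x]
    = [set: X].

Definition first_return (X : Type) (alpha : X -> X) (Y : set X) (y : X)
  (n : nat) : Prop :=
  [/\ (0 < n)%N, Y (iter n alpha y) &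
      forall j, (0 < j < n)%N -> ~ Y (iter j alpha y)].

Definition return_values (X : Type) (alpha : X -> X) (Y : set X) (K : nat)
  (r : nat -> nat) : Prop :=
  [/\ forall k l, (1 <= k)%N -> (k < l)%N -> (l <= K)%N -> (r k < r l)%N,
      forall k, (1 <= k <= K)%N -> exists2 y, Y y & first_return alpha Y y (r k) &
      forall y, Y y -> exists2 k, (1 <= k <= K)%N & first_return alpha Y y (r k)].

Definition Yk (X : Type) (alpha : X -> X) (Y : set X) (r : nat -> nat)
  (k : nat) : set X :=
  [set y | Y y /\ first_return alpha Y y (r k)].

(* The Hermitian line bundle V is given by a (unitary) cocycle:             *)
(* an open cover (U i)_{i : I} of X and continuous transition functions     *)
(* g i j : U i /\ U j -> S^1 with g i j * g j k = g i k; a point of V_x is   *)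
(* a family of coordinates c with c_i = g i j x * c_j.                       *)
Definition hlb_data (R : realType) (X : topologicalType) (I : Type)
  (U : I -> set X) (g : I -> I -> X -> R[i]) : Prop :=
  [/\ forall i, open (U i),
      forall x, exists i, U i x,
      forall i j, ccontinuous_within (U i `&` U j) (g i j),
      forall i j x, U i x -> U j x -> `|g i j x| = 1 &
      forall i j k x, U i x -> U j x -> U k x -> g i j x * g j k x = g i k x].

(* Charts of V^(n) = (alpha^{n-1})^*V (x) ... (x) alpha^*V (x) V:            *)
(* indexed by t : nat -> I (only t 0, ..., t (n-1) matter).                  *)
Definition Un (X : Type) (I : Type) (alpha : X -> X) (U : I -> set X)
  (n : nat) (t : nat -> I) : set X :=
  [set x | forall l, (l < n)%N -> U (t l) (iter l alpha x)].

Definition gn (R : realType) (X : Type) (I : Type) (alpha : X -> X)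
  (g : I -> I -> X -> R[i]) (n : nat) (t t' : nat -> I) (x : X) : R[i] :=
  \prod_(l < n) g (t l) (t' l) (iter l alpha x).

Definition shiftn (I : Type) (i : nat) (t : nat -> I) : nat -> I :=
  fun l => t (l + i)%N.

Definition fiber (R : realType) (X : Type) (I : Type) (alpha : X -> X)
  (U : I -> set X) (g : I -> I -> X -> R[i]) (n : nat) (x : X)
  (v : (nat -> I) -> R[i]) : Prop :=
  forall t t', Un alpha U n t x -> Un alpha U n t' x ->
    v t = gn alpha g n t t' x * v t'.

Definition fiber_eq (R : realType) (X : Type) (I : Type) (alpha : X -> X)
  (U : I -> set X) (n : nat) (x : X) (v w : (nat -> I) -> R[i]) : Prop :=
  forall t, Un alpha U n t x -> v t = w t.

Definition is_section (R : realType) (X : topologicalType) (I : Type)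
  (alpha : X -> X) (U : I -> set X) (g : I -> I -> X -> R[i]) (n : nat)
  (G : X -> (nat -> I) -> R[i]) : Prop :=
  (forall x, fiber alpha U g n x (G x)) /\
  (forall t, ccontinuous_within (Un alpha U n t) (fun x => G x t)).

(* sig is a continuous section of End(D^(n)) restricted to A, where         *)
(* D^(n) = V^(0) (+) ... (+) V^(n-1); in the chart t (trivialising all the   *)
(* V^(p), p < n, at once) sig x t is the n x n matrix (entries p q, p,q < n) *)
(* of sig(x); the matrices transform by conjugation with the diagonal        *)
(* transition matrix diag(gn p t t' x)_p.                                    *)
Definition end_section (R : realType) (X : topologicalType) (I : Type)
  (alpha : X -> X) (U : I -> set X) (g : I -> I -> X -> R[i]) (n : nat)
  (A : set X) (sig : X -> (nat -> I) -> nat -> nat -> R[i]) : Prop :=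
  (forall x t t' p q, A x -> Un alpha U n t x -> Un alpha U n t' x ->
     (p < n)%N -> (q < n)%N ->
     sig x t p q * gn alpha g q t t' x = gn alpha g p t t' x * sig x t' p q) /\
  (forall t p q, (p < n)%N -> (q < n)%N ->
     ccontinuous_within (A `&` Un alpha U n t) (fun x => sig x t p q)).

(* m-th subdiagonal matrix representation: sig(x) maps V^(q) into V^(q+m)   *)
(* (into 0 when q+m >= n), i.e. the q-th column is supported on row q+m.     *)
Definition subdiag (R : realType) (X : Type) (I : Type) (alpha : X -> X)
  (U : I -> set X) (n m : nat) (A : set X)
  (sig : X -> (nat -> I) -> nat -> nat -> R[i]) : Prop :=
  forall x t p q, A x -> Un alpha U n t x -> (p < n)%N -> (q < n)%N ->
    p != (q + m)%N -> sig x t p q = 0.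

(* w is sig^(i)(x) \in V^(m)_{alpha^i x}: for i < n - m it is the unique w   *)
(* with sig(x) v = w (x) v for all v \in V^(i)_x (using                      *)
(* V^(i+m)_x = V^(m)_{alpha^i x} (x) V^(i)_x, whose coordinates in chart t  *)
(* are w (shiftn i t) * v t); for n - m <= i it is 0.                        *)
Definition sub_comp (R : realType) (X : Type) (I : Type) (alpha : X -> X)
  (U : I -> set X) (g : I -> I -> X -> R[i]) (n m : nat)
  (sig : X -> (nat -> I) -> nat -> nat -> R[i]) (x : X) (i : nat)
  (w : (nat -> I) -> R[i]) : Prop :=
  fiber alpha U g m (iter i alpha x) w /\
  (if (i + m < n)%N then
     forall (v : (nat -> I) -> R[i]) t, fiber alpha U g i x v ->
       Un alpha U n t x -> sig x t (i + m)%N i * v t = w (shiftn i t) * v t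
   else fiber_eq alpha U m (iter i alpha x) w (fun _ => 0)).

(* R_s = r_{t_1} + ... + r_{t_s} (0-based list ts = [t_1; ...; t_p]) *)
Definition Rs (r : nat -> nat) (ts : seq nat) (s : nat) : nat :=
  (\sum_(j < s) r (nth 0%N ts j))%N.

Definition boundary_decomp (R : realType) (X : topologicalType) (I : Type)
  (alpha : X -> X) (U : I -> set X) (Y : set X) (K : nat) (r : nat -> nat)
  (sig : nat -> X -> (nat -> I) -> nat -> nat -> R[i]) : Prop :=
  forall k x, (1 <= k <= K)%N -> closure (Yk alpha Y r k) x ->
    ~ Yk alpha Y r k x ->
    exists ts : seq nat,
      [/\ all (fun t => (1 <= t < k)%N) ts,
          (\sum_(t <- ts) r t)%N = r k,
          forall s, (s < size ts)%N ->
            Yk alpha Y r (nth 0%N ts s) (iter (Rs r ts s) alpha x) &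
          forall s t p q, (s < size ts)%N -> Un alpha U (r k) t x ->
            (Rs r ts s <= q < Rs r ts s.+1)%N -> (p < r k)%N ->
            sig k x t p q =
              if (Rs r ts s <= p < Rs r ts s.+1)%N then
                sig (nth 0%N ts s) (iter (Rs r ts s) alpha x)
                    (shiftn (Rs r ts s) t) (p - Rs r ts s)%N (q - Rs r ts s)%N
              else 0].

(* Every point z of X lies in one of the finitely many closed tower pieces
   alpha^i (closure Y_k), i < r_k: their union is closed, nonempty and
   forward alpha-invariant, hence all of X by compactness and minimality.
   Over such a point, G z is read off the (i + m, i) entry of sig_k at
   alpha^-i z.  This does not depend on the piece: the boundary decomposition
   property moves a boundary point of Y_k to a point of some Y_k' carrying the
   same entry, and a point is alpha^i y with y in Y_k and i < r_k in only one
   way, because r_Y is a first return time.  Continuity is checked piece by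
   piece on the closed cover, and G vanishes on alpha^-j Y, 1 <= j <= m,
   because a nonzero entry forces i + m < r_k, so that alpha^(i + j) y in Y
   would be an early return. *)

From HB Require Import structures.
From mathcomp Require Import all_boot all_order all_algebra.
From mathcomp Require Import all_classical all_reals all_analysis.
From mathcomp.real_closed Require Import complex.
From mathcomp Require Import zify.
Set Implicit Arguments. Unset Strict Implicit. Unset Printing Implicit Defensive.
Import Order.TTheory GRing.Theory Num.Theory.
Import numFieldNormedType.Exports.
Local Open Scope classical_set_scope.
Local Open Scope ring_scope.

Lemma filter_bigcap (T : Type) (J : choiceType) (D : set J) (P : J -> set T)
    (F : set_system T) :
  Filter F -> finite_set D -> (forall i, D i -> F (P i)) ->
  F (\bigcap_(i in D) P i).
Proof.
move=> FF finD FP; rewrite -(fset_setK finD); apply: filter_bigI => i.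
by rewrite in_fset_set // inE; exact: FP.
Qed.

Lemma continuous_at_closed_cover (T S : topologicalType) (J : choiceType)
    (D : set J) (Q : J -> set T) (f : T -> S) (z : T) :
  finite_set D -> (forall i, D i -> closed (Q i)) ->
  (forall x, exists2 i, D i & Q i x) ->
  (forall i, D i -> Q i z -> f @ within (Q i) (nbhs z) --> f z) ->
  {for z, continuous f}.
Proof.
move=> finD clQ covQ fQ W Wfz.
have near_piece i : D i -> nbhs z (fun x => Q i x -> W (f x)).
  move=> Di; have [Qiz|nQiz] := pselect (Q i z); first exact: fQ.
  have : nbhs z (~` Q i).
    by apply: open_nbhs_nbhs; split => //; exact: closed_openC (clQ i Di).
  by apply: filterS => x nQx /nQx.
have /(filterS _) : nbhs z (\bigcap_(i in D) (fun x => Q i x -> W (f x))).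
  exact: filter_bigcap.
by apply=> x allQ; have [i Di Qix] := covQ x; exact: allQ i Di Qix.
Qed.

Lemma cvg_within_factor (T T' S : topologicalType) (Q : set T) (D : set T')
    (h : T -> T') (F : T' -> S) (f : T -> S) (z : T) :
  Q z -> {for z, continuous h} -> {within D, continuous F} ->
  (\forall x \near z, Q x -> D (h x) /\ f x = F (h x)) ->
  f @ within Q (nbhs z) --> f z.
Proof.
move=> Qz hz FD fE; have [Dhz ->] := nbhs_singleton fE Qz.
move=> W WF; have FW : nbhs (h z) (fun y => D y -> W (F y)).
  exact: (subspace_continuousP _ _).1 FD (h z) Dhz W WF.
apply: filterS (filterI fE (hz _ FW)) => x [fEx FWx] Qx.
by have [Dhx fx] := fEx Qx; rewrite /= fx; exact: FWx.
Qed.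

Lemma compact_nonincreasing_closed (T : topologicalType) (F : nat -> set T) :
  compact [set: T] -> (forall n, closed (F n)) -> (forall n, F n.+1 `<=` F n) ->
  (forall n, F n !=set0) -> exists p, forall n, F n p.
Proof.
move=> cptT clF decF neF.
have mono a b : (a <= b)%N -> F b `<=` F a.
  by move/subnK <-; elim: (b - a)%N => // d IH x; rewrite addSn => /decF/IH.
have PF : ProperFilter (filter_from setT F).
  apply: filter_from_proper => [|n _]; last exact: neF.
  apply: filter_from_filter; first by exists 0%N.
  move=> a b _ _; exists (maxn a b) => // x Fx.
  by split; apply: mono Fx; rewrite ?leq_maxl ?leq_maxr.
have [p [_ clp]] := cptT _ PF filterT.
by exists p => n; apply: clF => B nB; apply: clp nB; exists n.
Qed.

Lemma continuous_iter (T : topologicalType) (f : T -> T) n :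
  continuous f -> continuous (iter n f).
Proof.
move=> cf; elim: n => [|n IH] x /=; first exact: cvg_id.
exact: continuous_comp (IH x) (cf _).
Qed.

Lemma can_iter (T : Type) (f h : T -> T) n :
  cancel f h -> cancel (iter n f) (iter n h).
Proof. by move=> fK; elim: n => [|n IH] x //; rewrite iterSr iterS fK IH. Qed.

Section MinimalHomeo.
Variables (X : topologicalType) (alpha beta : X -> X).
Hypotheses (cptX : compact [set: X]) (hab : homeo alpha beta)
  (minab : minimal_homeo alpha beta).

Lemma minimal_forward_invariant (S : set X) :
  closed S -> S !=set0 -> (forall x, S x -> S (alpha x)) -> S = [set: X].
Proof.
move=> clS [x0 Sx0] invS; have [_ cb ab ba] := hab.
have [p Sp] : exists p, forall n, S (iter n beta p).
  apply: (@compact_nonincreasing_closed _ (fun n => iter n beta @^-1` S)) => //.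
  - move=> n; apply: preimage_closed => // x _; exact: continuous_iter.
  - by move=> n x /invS; rewrite iterS ba.
  - by move=> n; exists (iter n alpha x0); rewrite /= can_iter.
have Sfwd n : S (iter n alpha p).
  by elim: n => [|n IH]; [exact: (Sp 0%N)|rewrite iterS; exact: invS].
have orbS : [set y | exists n, y = iter n alpha p \/ y = iter n beta p] `<=` S.
  by move=> y [n [->|->]].
apply/seteqP; split=> // x _; apply: clS.
by apply: (closureS orbS); rewrite minab.
Qed.

End MinimalHomeo.

Section Charts.
Variables (R : realType) (X : topologicalType) (alpha : X -> X) (I : Type)
  (U : I -> set X) (g : I -> I -> X -> R[i]).
Hypothesis hlb : hlb_data U g.

Lemma transition_neq0 i j x : U i x -> U j x -> g i j x != 0.
Proof.
by have [_ _ _ g1 _] := hlb => Ui Uj; rewrite -normr_eq0 g1 // oner_eq0.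
Qed.

Lemma transition_refl j x : U j x -> g j j x = 1.
Proof.
move=> Uj; have [_ _ _ _ gjjj] := hlb.
apply: (mulfI (transition_neq0 Uj Uj)).
by rewrite gjjj // mulr1.
Qed.

Lemma Un_le n1 n2 t x : (n1 <= n2)%N -> Un alpha U n2 t x -> Un alpha U n1 t x.
Proof. by move=> le12 Ux l ln1; apply: Ux; exact: leq_trans ln1 le12. Qed.

Lemma Un_shift a b t x : Un alpha U (a + b) t x ->
  Un alpha U b (shiftn a t) (iter a alpha x).
Proof.
by move=> Ux l lb; rewrite /shiftn -iterD; apply: Ux; rewrite addnC ltn_add2l.
Qed.

Lemma gn_neq0 n t t' x : Un alpha U n t x -> Un alpha U n t' x ->
  gn alpha g n t t' x != 0.
Proof.
move=> Ux U'x; apply/prodf_neq0 => l _.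
by apply: transition_neq0; [exact: Ux|exact: U'x].
Qed.

Lemma gn_trans n t1 t2 t3 x : Un alpha U n t1 x -> Un alpha U n t2 x ->
  Un alpha U n t3 x ->
  gn alpha g n t1 t2 x * gn alpha g n t2 t3 x = gn alpha g n t1 t3 x.
Proof.
move=> U1 U2 U3; rewrite /gn -big_split /=; apply: eq_bigr => l _.
by have [_ _ _ _ gc] := hlb; apply: gc; [exact: U1|exact: U2|exact: U3].
Qed.

Lemma gn_eq1 n t t' x : (forall l, (l < n)%N -> t l = t' l) ->
  Un alpha U n t x -> gn alpha g n t t' x = 1.
Proof.
move=> tt' Ux; apply: big1 => l _.
by rewrite -tt' //; apply: transition_refl; exact: Ux.
Qed.

Lemma gnD a b t t' x :
  gn alpha g (a + b) t t' x =
    gn alpha g a t t' x *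
    gn alpha g b (shiftn a t) (shiftn a t') (iter a alpha x).
Proof.
rewrite /gn big_split_ord /=; congr (_ * _); apply: eq_bigr => l _.
by rewrite /shiftn -iterD addnC.
Qed.

Lemma fiber_gn n t x : Un alpha U n t x ->
  fiber alpha U g n x (fun t0 => gn alpha g n t0 t x).
Proof. by move=> Ux t1 t2 U1 U2; rewrite gn_trans. Qed.

Lemma end_section_entry_transition n A s m i x t t' :
  end_section alpha U g n A s -> A x ->
  Un alpha U n t x -> Un alpha U n t' x -> (i + m < n)%N ->
  s x t (i + m)%N i =
    gn alpha g m (shiftn i t) (shiftn i t') (iter i alpha x) *
    s x t' (i + m)%N i.
Proof.
move=> [sT _] Ax Ux U'x imn.
have i_n : (i < n)%N by exact: leq_ltn_trans (leq_addr m i) imn.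
have := sT x t t' (i + m)%N i Ax Ux U'x imn i_n.
rewrite gnD mulrC -mulrA; apply: mulfI.
by apply: gn_neq0; apply: Un_le (ltnW i_n) _.
Qed.

Hypothesis calpha : continuous alpha.

Lemma Un_open n t : open (Un alpha U n t).
Proof.
have [Uopen _ _ _ _] := hlb; rewrite openE => x Ux.
have near_l l : `I_n l -> nbhs x (iter l alpha @^-1` U (t l)).
  move=> ln; apply: (continuous_iter (n:=l) calpha).
  by apply: open_nbhs_nbhs; split => //; exact: Ux.
apply: filterS (filter_bigcap _ (finite_II n) near_l) => y Uy l ln.
exact: Uy.
Qed.

End Charts.

Lemma first_return_uniq (X : Type) (alpha : X -> X) (Y : set X) y n1 n2 :
  first_return alpha Y y n1 -> first_return alpha Y y n2 -> n1 = n2.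
Proof.
move=> [n1_gt0 Y1 min1] [n2_gt0 Y2 min2].
have [lt12|lt21|//] := ltngtP n1 n2.
- by case: (min2 n1); rewrite ?n1_gt0.
- by case: (min1 n2); rewrite ?n2_gt0.
Qed.

Section Towers.
Variables (X : topologicalType) (alpha beta : X -> X) (Y : set X) (K : nat)
  (r : nat -> nat).
Hypotheses (cptX : compact [set: X]) (hab : homeo alpha beta)
  (minab : minimal_homeo alpha beta) (clY : closed Y)
  (intY : interior Y !=set0) (retY : return_values alpha Y K r).

Local Notation Yr := (Yk alpha Y r).

Lemma return_inj k l : (1 <= k <= K)%N -> (1 <= l <= K)%N -> r k = r l -> k = l.
Proof.
have [rlt _ _] := retY; move=> /andP[k1 kK] /andP[l1 lK] rkl.
have [lt|gt|//] := ltngtP k l.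
- by have := rlt k l k1 lt lK; rewrite rkl ltnn.
- by have := rlt l k l1 gt kK; rewrite rkl ltnn.
Qed.

Lemma return_le_max k : (1 <= k <= K)%N -> (r k <= r K)%N.
Proof.
have [rlt _ _] := retY; case/andP => k1; rewrite leq_eqVlt => /orP[/eqP->//|kK].
exact: ltnW (rlt _ _ k1 kK (leqnn K)).
Qed.

Lemma return_gt0 k : (1 <= k <= K)%N -> (0 < r k)%N.
Proof. by have [_ ex _] := retY => /ex [y _ []]. Qed.

Lemma Yk_cover y : Y y -> exists2 k, (1 <= k <= K)%N & Yr k y.
Proof. by have [_ _ cov] := retY => /[dup] Yy /cov [k hk fr]; exists k. Qed.

Lemma closure_Yk_return k y : closure (Yr k) y -> Y (iter (r k) alpha y).
Proof.
have [ca _ _ _] := hab => cly.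
have : closed (iter (r k) alpha @^-1` Y).
  by apply: preimage_closed => // x _; exact: continuous_iter.
by apply; apply: (closureS _ cly) => z [_ []].
Qed.

Lemma Yk_orbit_uniq k1 i1 y1 k2 i2 y2 :
  (1 <= k1 <= K)%N -> (1 <= k2 <= K)%N -> Yr k1 y1 -> Yr k2 y2 ->
  (i1 < r k1)%N -> (i2 < r k2)%N -> iter i1 alpha y1 = iter i2 alpha y2 ->
  [/\ k1 = k2, i1 = i2 & y1 = y2].
Proof.
wlog le12 : k1 i1 y1 k2 i2 y2 / (i1 <= i2)%N.
  move=> wlog_le hk1 hk2 Y1 Y2 ir1 ir2 E.
  have [le|/ltnW le] := leqP i1 i2; first exact: wlog_le.
  by have [-> -> ->] := wlog_le _ _ _ _ _ _ le hk2 hk1 Y2 Y1 ir2 ir1 (esym E).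
move=> hk1 hk2 [Yy1 fr1] [Yy2 fr2] ir1 ir2 E; have [_ _ ab _] := hab.
have y1E : y1 = iter (i2 - i1) alpha y2.
  by apply: (can_inj (can_iter i1 ab)); rewrite E -iterD subnKC.
have i12 : i1 = i2.
  have [d0|d_gt0] := posnP (i2 - i1).
    by apply/eqP; rewrite eqn_leq le12 -subn_eq0 d0.
  case: fr2 => _ _ /(_ (i2 - i1)%N); rewrite -y1E d_gt0 => /(_ _ Yy1) [] //.
  exact: leq_ltn_trans (leq_subr i1 i2) ir2.
move: y1E; rewrite i12 subnn => /= y12; subst y1 i1; split => //.
by apply: return_inj => //; exact: first_return_uniq fr1 fr2.
Qed.

Definition tower_index : set (nat * nat) :=
  [set p | (1 <= p.1 <= K)%N /\ (p.2 < r p.1)%N].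

Definition tower_piece (p : nat * nat) : set X :=
  iter p.2 beta @^-1` closure (Yr p.1).

Lemma tower_index_finite : finite_set tower_index.
Proof.
apply: (@sub_finite_set _ _ (`I_K.+1 `*` `I_(r K))).
  move=> [k i] [/= hk ir]; split => /=; first by rewrite ltnS; case/andP: hk.
  exact: leq_trans ir (return_le_max hk).
exact: finite_setX (finite_II _) (finite_II _).
Qed.

Lemma tower_piece_closed p : closed (tower_piece p).
Proof.
have [_ cb _ _] := hab; apply: preimage_closed; last exact: closed_closure.
by move=> x _; exact: continuous_iter.
Qed.

Lemma towers_alpha z : (\bigcup_(p in tower_index) tower_piece p) z ->
  (\bigcup_(p in tower_index) tower_piece p) (alpha z).
Proof.
move=> [[k i] [/= hk ir] cl]; have [_ _ ab ba] := hab.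
have [lt|ge] := ltnP i.+1 (r k).
  by exists (k, i.+1); [split|rewrite /tower_piece /= -iterS iterSr ab].
have rkE : r k = i.+1 by apply/eqP; rewrite eqn_leq ge ir.
have Yaz : Y (alpha z).
  by have := closure_Yk_return cl; rewrite rkE iterS can_iter.
have [k' hk' Yk'az] := Yk_cover Yaz.
exists (k', 0%N); first by split => //=; exact: return_gt0.
exact: subset_closure.
Qed.

Lemma towers_cover z : exists2 p, tower_index p & tower_piece p z.
Proof.
suff : (\bigcup_(p in tower_index) tower_piece p) z by [].
rewrite (minimal_forward_invariant cptX hab minab _ _ towers_alpha) //.
  apply: closed_bigcup => [|p _]; first exact: tower_index_finite.
  exact: tower_piece_closed.
have [y /interior_subset Yy] := intY; have [k hk Yky] := Yk_cover Yy.
exists y; exists (k, 0%N); first by split => //=; exact: return_gt0.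
exact: subset_closure.
Qed.

End Towers.

Lemma RsS r ts s : Rs r ts s.+1 = (Rs r ts s + r (nth 0%N ts s))%N.
Proof. by rewrite /Rs big_ord_recr. Qed.

Lemma Rs_size r ts : Rs r ts (size ts) = (\sum_(t <- ts) r t)%N.
Proof. by rewrite /Rs (big_nth 0%N) big_mkord. Qed.

Lemma leq_Rs r ts a b : (a <= b)%N -> (Rs r ts a <= Rs r ts b)%N.
Proof.
move/subnK <-; elim: (b - a)%N => // d IH.
by rewrite addSn RsS; exact: leq_trans IH (leq_addr _ _).
Qed.

Lemma Rs_block r ts n i : (i < Rs r ts n)%N ->
  exists2 s, (s < n)%N & (Rs r ts s <= i < Rs r ts s.+1)%N.
Proof.
elim: n => [|n IH]; first by rewrite /Rs big_ord0.
have [iRn _|Rni iRSn] := ltnP i (Rs r ts n); last by exists n; rewrite ?Rni.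
by have [s sn blk] := IH iRn; exists s => //; exact: ltnW.
Qed.

Section Gluing.
Variables (R : realType) (X : topologicalType) (alpha beta : X -> X)
  (I : Type) (U : I -> set X) (g : I -> I -> X -> R[i]) (Y : set X) (K : nat)
  (r : nat -> nat) (sig : nat -> X -> (nat -> I) -> nat -> nat -> R[i])
  (m : nat).
Hypotheses (cptX : compact [set: X]) (hab : homeo alpha beta)
  (minab : minimal_homeo alpha beta) (hlb : hlb_data U g) (clY : closed Y)
  (intY : interior Y !=set0) (retY : return_values alpha Y K r)
  (endS : forall k, (1 <= k <= K)%N ->
     end_section alpha U g (r k) (closure (Yk alpha Y r k)) (sig k))
  (bdS : boundary_decomp alpha U Y K r sig).

Local Notation Yr := (Yk alpha Y r).

(* The coordinate of sig_k^(i)(y) in the chart [shiftn i t] of V^(m) at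
   alpha^i y, where t is a chart of V^(r_k) at y. *)
Definition sub_entry k i y t : R[i] :=
  if (i + m < r k)%N then sig k y t (i + m)%N i else 0.

Definition witness z t' k i y t : Prop :=
  [/\ tower_index K r (k, i), closure (Yr k) y, iter i alpha y = z,
      Un alpha U (r k) t y & forall l, (l < m)%N -> shiftn i t l = t' l].

Lemma sub_entry_chart k i y t1 t2 : (1 <= k <= K)%N -> closure (Yr k) y ->
  Un alpha U (r k) t1 y -> Un alpha U (r k) t2 y ->
  (forall l, (l < m)%N -> shiftn i t1 l = shiftn i t2 l) ->
  sub_entry k i y t1 = sub_entry k i y t2.
Proof.
move=> hk cly U1 U2 t12; rewrite /sub_entry; case: ifP => // imk.
rewrite (end_section_entry_transition hlb (endS hk) cly U1 U2 imk).
rewrite (gn_eq1 hlb) ?mul1r //.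
by apply: Un_shift; apply: Un_le (ltnW imk) U1.
Qed.

Lemma boundary_entry k i y : (1 <= k <= K)%N -> (i < r k)%N ->
  closure (Yr k) y -> ~ Yr k y ->
  exists k' a, [/\ tower_index K r (k', i - a)%N, (a <= i)%N,
    Yr k' (iter a alpha y) &
    forall t, Un alpha U (r k) t y ->
      Un alpha U (r k') (shiftn a t) (iter a alpha y) /\
      sub_entry k i y t = sub_entry k' (i - a) (iter a alpha y) (shiftn a t)].
Proof.
move=> hk ir cly nYy; have [ts [tsk sumts Yts blk]] := bdS hk cly nYy.
(* i lies in a block [R_s, R_(s+1)) of the decomposition, on which sig_k(y)
   acts as sig_(t_s) at alpha^(R_s) y. *)
have [s ss /andP[ai iRs]] :
    exists2 s, (s < size ts)%N & (Rs r ts s <= i < Rs r ts s.+1)%N.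
  by apply: Rs_block; rewrite Rs_size sumts.
set a := Rs r ts s in ai iRs *; set k' := nth 0%N ts s.
have aRs : Rs r ts s.+1 = (a + r k')%N by rewrite RsS.
have Rs_rk : (a + r k' <= r k)%N by rewrite -aRs -sumts -Rs_size leq_Rs.
have hk' : (1 <= k' <= K)%N.
  have /andP[k'1 k'k] := allP tsk _ (mem_nth 0%N ss).
  by rewrite k'1 (leq_trans (ltnW k'k)) //; case/andP: hk.
exists k', a; split => //; first by split => //=; rewrite aRs in iRs; lia.
  exact: Yts.
move=> t Ut; split; first by apply: Un_shift; apply: Un_le Rs_rk Ut.
rewrite /sub_entry; case: ifP => imk; last first.
  by case: ifP => // imk'; exfalso; move: imk imk'; lia.
rewrite (blk s t (i + m)%N i ss Ut) ?ai ?iRs // -/a -/k' aRs.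
have -> : (i + m - a = i - a + m)%N by lia.
by case: ifP => h1; case: ifP => h2 //; exfalso; move: h1 h2; lia.
Qed.

Lemma witness_genuine z t' k i y t : witness z t' k i y t ->
  exists k' i' y' t'', [/\ witness z t' k' i' y' t'', Yr k' y' &
    sub_entry k i y t = sub_entry k' i' y' t''].
Proof.
case=> [[hk ir] cly yz Ut tt']; have [Yy|nYy] := pselect (Yr k y).
  by exists k, i, y, t.
have [k' [a [ki' ai Yy' blk]]] := boundary_entry hk ir cly nYy.
have [Ut' ->] := blk t Ut.
exists k', (i - a)%N, (iter a alpha y), (shiftn a t); split => //; split => //.
- exact: subset_closure.
- by rewrite -iterD subnK.
- by move=> l lm; rewrite /shiftn -addnA subnK //; exact: tt'.
Qed.

Lemma witness_consistent z t' k1 i1 y1 t1 k2 i2 y2 t2 :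
  witness z t' k1 i1 y1 t1 -> witness z t' k2 i2 y2 t2 ->
  sub_entry k1 i1 y1 t1 = sub_entry k2 i2 y2 t2.
Proof.
move=> /witness_genuine [l1 [j1 [x1 [s1 [[[/= hl1 jr1] _ xz1 U1 a1] Y1 ->]]]]].
move=> /witness_genuine [l2 [j2 [x2 [s2 [[[/= hl2 jr2] _ xz2 U2 a2] Y2 ->]]]]].
have := Yk_orbit_uniq hab retY hl1 hl2 Y1 Y2 jr1 jr2 (etrans xz1 (esym xz2)).
case=> el ej ex; subst l2 j2 x2.
apply: sub_entry_chart => //; first exact: subset_closure.
by move=> l lm; rewrite a1 ?a2.
Qed.

Lemma witness_exists z t' k i y : tower_index K r (k, i) -> closure (Yr k) y ->
  iter i alpha y = z -> Un alpha U m t' z -> exists t, witness z t' k i y t.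
Proof.
move=> ki cly yz Ut'; have [_ cov _ _ _] := hlb; have [ch chP] := choice cov.
exists (fun l =>
  if (i <= l < i + m)%N then t' (l - i)%N else ch (iter l alpha y)).
split => // [l _|l lm].
  case: ifP => [/andP[il lim]|_]; last exact: chP.
  by have := Ut' (l - i)%N; rewrite -yz -iterD subnK //; apply; lia.
by rewrite /shiftn leq_addl addnC ltn_add2l lm addKn.
Qed.

(* [xget] returns the junk value 0 when [t'] is not a chart at [z]. *)
Definition glued_section (z : X) (t' : nat -> I) : R[i] :=
  xget 0 [set c | exists k i y t,
    witness z t' k i y t /\ c = sub_entry k i y t].

Lemma glued_sectionE z t' k i y t : witness z t' k i y t ->
  glued_section z t' = sub_entry k i y t.
Proof.
move=> W; apply: xget_unique; first by exists k, i, y, t.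
by move=> _ [k2 [i2 [y2 [t2 [W2 ->]]]]]; exact: witness_consistent W2 W.
Qed.

Lemma witness_cover z t' : Un alpha U m t' z ->
  exists k i t, witness z t' k i (iter i beta z) t.
Proof.
move=> Ut'; have [_ _ _ ba] := hab.
have [[k i] ki piece_z] := towers_cover cptX hab minab clY intY retY z.
have [t W] := witness_exists ki piece_z (can_iter i ba z) Ut'.
by exists k, i, t.
Qed.

Lemma glued_section_fiber x : fiber alpha U g m x (glued_section x).
Proof.
move=> t1' t2' U1' U2'; have [k [i [t1 W1]]] := witness_cover U1'.
have [[hk ir] cly yx Ut1 a1] := W1.
have [t2 W2] := witness_exists (conj hk ir) cly yx U2'.
have [_ _ _ Ut2 a2] := W2.
rewrite (glued_sectionE W1) (glued_sectionE W2) /sub_entry.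
case: ifP => imk; last by rewrite mulr0.
rewrite (end_section_entry_transition hlb (endS hk) cly Ut1 Ut2 imk) yx.
by congr (_ * _); apply: eq_bigr => l _; rewrite a1 ?a2.
Qed.

Lemma glued_section_sub_comp k i x w : (1 <= k <= K)%N -> (i < r k)%N ->
  closure (Yr k) x -> sub_comp alpha U g (r k) m (sig k) x i w ->
  fiber_eq alpha U m (iter i alpha x) (glued_section (iter i alpha x)) w.
Proof.
move=> hk ir clx [Fw Hw] t' Ut'.
have [t W] := witness_exists (conj hk ir) clx erefl Ut'.
rewrite (glued_sectionE W) /sub_entry; have [_ _ _ Ut tt'] := W.
move: Hw; case: ifP => imk Hw; last by rewrite Hw.
have Uti : Un alpha U i t x by exact: Un_le (ltnW ir) Ut.
have := Hw _ t (fiber_gn hlb Uti) Ut; rewrite (gn_eq1 hlb) // !mulr1 => ->.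
have Us : Un alpha U m (shiftn i t) (iter i alpha x).
  by apply: Un_shift; apply: Un_le (ltnW imk) Ut.
by rewrite (Fw _ _ Us Ut') (gn_eq1 hlb) ?mul1r.
Qed.

Lemma glued_section_vanish x j : (1 <= j <= m)%N -> Y (iter j alpha x) ->
  fiber_eq alpha U m x (glued_section x) (fun _ => 0).
Proof.
move=> jm Yj t' Ut'; have [k [i [t W]]] := witness_cover Ut'.
have [k' [i' [y' [t'' [W' [_ [_ _ min']] _]]]]] := witness_genuine W.
rewrite (glued_sectionE W') /sub_entry; case: ifP => // imk.
have [_ _ yx _ _] := W'; case: (min' (i' + j)%N); first by lia.
by rewrite addnC iterD yx.
Qed.

Lemma sub_entry_ccontinuous k i t : (1 <= k <= K)%N -> (i < r k)%N ->
  ccontinuous_within (closure (Yr k) `&` Un alpha U (r k) t)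
    (sub_entry k i ^~ t).
Proof.
move=> hk ir; have [imk|nimk] := boolP (i + m < r k)%N.
  rewrite (_ : sub_entry k i ^~ t = fun y => sig k y t (i + m)%N i).
    exact: (endS hk).2.
  by apply: funext => y; rewrite /sub_entry imk.
rewrite (_ : sub_entry k i ^~ t = fun=> 0).
  by split; apply: continuous_subspaceT; exact: cst_continuous.
by apply: funext => y; rewrite /sub_entry (negbTE nimk).
Qed.

Lemma glued_section_near k i z t' :
  tower_index K r (k, i) -> tower_piece alpha beta Y r (k, i) z ->
  Un alpha U m t' z ->
  exists t, ccontinuous_within (closure (Yr k) `&` Un alpha U (r k) t)
      (fun y => sub_entry k i y t) /\
    \forall x \near z, tower_piece alpha beta Y r (k, i) x ->
      (closure (Yr k) `&` Un alpha U (r k) t) (iter i beta x) /\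
      glued_section x t' = sub_entry k i (iter i beta x) t.
Proof.
move=> ki piece_z Ut'z; have [ca cb _ ba] := hab.
have [t W] := witness_exists ki piece_z (can_iter i ba z) Ut'z.
have [[hk ir] _ _ Ut tt'] := W; exists t; split.
  exact: sub_entry_ccontinuous.
have near_Ut : \forall x \near z, Un alpha U (r k) t (iter i beta x).
  apply: (continuous_iter (n:=i) cb); apply: open_nbhs_nbhs; split => //.
  exact: (Un_open hlb ca).
have near_Ut' : \forall x \near z, Un alpha U m t' x.
  by apply: open_nbhs_nbhs; split => //; exact: (Un_open hlb ca).
apply: filterS (filterI near_Ut near_Ut') => x [Utx Ut'x] piece_x; split => //.
by apply: glued_sectionE; split => //; exact: can_iter.
Qed.

Lemma glued_section_continuous t' :
  ccontinuous_within (Un alpha U m t') (fun x => glued_section x t').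
Proof.
have [_ cb _ _] := hab.
have cont (phi : R[i] -> R) :
    (forall (A : set X) (h : X -> R[i]),
       ccontinuous_within A h -> {within A, continuous (phi \o h)}) ->
    {within Un alpha U m t', continuous (fun x => phi (glued_section x t'))}.
  move=> phiC; apply: continuous_in_subspaceT => z /[!inE] Ut'z.
  apply: (continuous_at_closed_cover (tower_index_finite retY)
    (fun p _ => tower_piece_closed hab (p:=p))
    (towers_cover cptX hab minab clY intY retY)) => -[k i] ki piece_z.
  have [t [Ct near_t]] := glued_section_near ki piece_z Ut'z.
  apply: (cvg_within_factor (h := iter i beta) piece_z _ (phiC _ _ Ct)).
    exact: continuous_iter.
  by apply: filterS near_t => x Ex /Ex [Dx Gx]; split; rewrite /= ?Gx.
by split; apply: cont => A h [].
Qed.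

End Gluing.

Theorem lemma8p3 (R : realType) (X : pseudoMetricType R)
  (alpha beta : X -> X) (I : Type) (U : I -> set X) (g : I -> I -> X -> R[i])
  (Y : set X) (K : nat) (r : nat -> nat)
  (sig : nat -> X -> (nat -> I) -> nat -> nat -> R[i]) (m : nat) :
  hausdorff_space X -> compact [set: X] -> ~ finite_set [set: X] ->
  homeo alpha beta -> minimal_homeo alpha beta ->
  hlb_data U g ->
  closed Y -> interior Y !=set0 ->
  return_values alpha Y K r ->
  (forall k, (1 <= k <= K)%N ->
     end_section alpha U g (r k) (closure (Yk alpha Y r k)) (sig k)) ->
  boundary_decomp alpha U Y K r sig ->
  (m < r K)%N ->
  (forall k, (1 <= k <= K)%N ->
     subdiag alpha U (r k) m (closure (Yk alpha Y r k)) (sig k)) ->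
  exists G : X -> (nat -> I) -> R[i],
    [/\ is_section alpha U g m G,
        forall k i x w, (1 <= k <= K)%N -> (i < r k)%N ->
          closure (Yk alpha Y r k) x ->
          sub_comp alpha U g (r k) m (sig k) x i w ->
          fiber_eq alpha U m (iter i alpha x) (G (iter i alpha x)) w &
        (1 <= m)%N -> forall x j, (1 <= j <= m)%N -> Y (iter j alpha x) ->
          fiber_eq alpha U m x (G x) (fun _ => 0)].
Proof.
(* G only reads the (i + m, i) entries of the sig_k, so the subdiagonal shape of
   sig_k and m < r_K are not needed; neither are Hausdorffness and
   infiniteness of X. *)
move=> _ cptX _ hab minab hlb clY intY retY endS bdS _ _.
exists (glued_section alpha U Y K r sig m); split.
- split=> [x|t'].
    exact: (glued_section_fiber cptX hab minab hlb clY intY retY endS bdS).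
  exact: (glued_section_continuous m cptX hab minab hlb clY intY retY endS bdS).
- exact: (glued_section_sub_comp hab hlb retY endS bdS).
- move=> _.
  exact: (glued_section_vanish cptX hab minab hlb clY intY retY endS bdS).
Qed.
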